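(* For all $i\in\mathbb{Z}$, $\beta\in\Bbbk^*$ and $0\le p\le k$, $$\lambda_\beta^i(k,p)=\binom{k}{p}_\gamma\gamma^{-(k-p)p}\prod_{l=p+1}^kR_\beta^i(l,0),$$ where the empty product (for $p=k$) equals $1$.
   Context: $\Bbbk$ is an algebraically closed field of characteristic $0$, $n\ge1$, $\gamma\in\Bbbk$ a primitive $n$-th root of unity. $\binom{k}{p}_\gamma$ denotes the Gaussian ($\gamma$-)binomial coefficient. Define $R_\beta^i(k,l)=\beta\gamma^{-l}-\gamma^{k-1-i}$ for $0\le l<k$ and $R_\beta^i(k,k)=1$. Define $\lambda_\beta^i(0,0)=1$, and for $k\ge1$: $\lambda_\beta^i(k,0)=R_\beta^i(k,0)\lambda_\beta^i(k-1,0)$, $\lambda_\beta^i(k,l)=R_\beta^i(k,l)\lambda_\beta^i(k-1,l)+\lambda_\beta^i(k-1,l-1)$ for $0<l<k$, $\lambda_\beta^i(k,k)=1$. *)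

From HB Require Import structures.
From mathcomp Require Import all_boot all_order all_algebra.
Set Implicit Arguments. Unset Strict Implicit. Unset Printing Implicit Defensive.
Import GRing.Theory.
Local Open Scope ring_scope.

(* Gaussian gamma-binomial coefficient, defined by the q-Pascal recursion
   (i.e. the Gaussian polynomial evaluated at q; valid at roots of unity):
   [k,0] = 1, [0,p+1] = 0, [k+1,p+1] = [k,p] + q^(p+1) [k,p+1]. *)
Fixpoint qbinom (F : ringType) (q : F) (k p : nat) : F :=
  match k, p with
  | _, 0%N => 1
  | 0%N, _.+1 => 0
  | k'.+1, p'.+1 => qbinom q k' p' + q ^+ p'.+1 * qbinom q k' p
  end.

Definition Rb (F : fieldType) (g b : F) (i : int) (k l : nat) : F :=
  if l == k then 1 else b * g ^ (- (l%:Z)) - g ^ (k%:Z - 1 - i).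

(* lambda_beta^i(k,l) for 0 <= l <= k (values for l > k are irrelevant). *)
Fixpoint lam (F : fieldType) (g b : F) (i : int) (k : nat) : nat -> F :=
  match k with
  | 0%N => fun l => if l == 0%N then 1 else 0
  | k'.+1 => fun l =>
      if l == k'.+1 then 1 else
      match l with
      | 0%N => Rb g b i k'.+1 0 * lam g b i k' 0
      | l'.+1 => Rb g b i k'.+1 l * lam g b i k' l + lam g b i k' l'
      end
  end.

From mathcomp Require Import all_boot all_order all_algebra.
From mathcomp Require Import zify ring.
Set Implicit Arguments.
Unset Strict Implicit.
Unset Printing Implicit Defensive.

Import GRing.Theory.
Local Open Scope ring_scope.

(* The recursion
     lam(k+1, p+1) = R(k+1, p+1) lam(k, p+1) + lam(k, p)
   turns the claim into an identity between Gaussian binomials: after pulling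
   out the common factor g^-((k-p)(p+1)) prod_{l=p+2..k} R(l,0), and with
   G = g^(k-i), it reads
     b ([k,p+1] + g^(k-p) [k,p]) - G ([k,p] + g^(p+1) [k,p+1])
       = [k+1,p+1] (b - G),
   which is the sum of the two q-Pascal rules, one multiplied by b and the
   other by G. *)

Section GaussianBinomial.

Variables (F : nzRingType) (q : F).

Lemma qbinom0 k : qbinom q k 0 = 1.
Proof. by case: k. Qed.

Lemma qbinomSS k p :
  qbinom q k.+1 p.+1 = qbinom q k p + q ^+ p.+1 * qbinom q k p.+1.
Proof. by []. Qed.

Lemma qbinom_small k p : (k < p)%N -> qbinom q k p = 0.
Proof.
elim: k p => [|k IHk] [|p] //= ltkp.
by rewrite !IHk ?mulr0 ?addr0 // ltnW.
Qed.

Lemma qbinomii k : qbinom q k k = 1.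
Proof. by elim: k => //= k ->; rewrite qbinom_small ?mulr0 ?addr0. Qed.

End GaussianBinomial.

Lemma qbinomSS_dual (F : comNzRingType) (q : F) k p : (p <= k)%N ->
  qbinom q k.+1 p.+1 = q ^+ (k - p) * qbinom q k p + qbinom q k p.+1.
Proof.
elim: k p => [|k IHk] [|p] lepk //.
- by rewrite /= !mulr0 !addr0 mul1r.
- rewrite qbinomSS {1}(IHk 0%N) // qbinomSS !qbinom0 subn0 !exprS; ring.
have [-> | nepk] := eqVneq p k.
  by rewrite !qbinomii qbinom_small // subnn expr0 mulr1 addr0.
have ltpk : (p < k)%N by rewrite ltn_neqAle nepk.
rewrite [LHS]qbinomSS {1}(IHk p (ltnW ltpk)) {1}(IHk p.+1 ltpk) !qbinomSS.
have -> : (k.+1 - p.+1 = (k - p.+1).+1)%N by lia.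
have -> : (k - p = (k - p.+1).+1)%N by lia.
rewrite !exprS; ring.
Qed.

Section LambdaClosedForm.

Variables (F : fieldType) (g b : F) (i : int).

Lemma Rb_neq k l : l != k -> Rb g b i k l = b * g ^ (- l%:Z) - g ^ (k%:Z - 1 - i).
Proof. by rewrite /Rb => /negPf ->. Qed.

Lemma Rb_0 l : (0 < l)%N -> Rb g b i l 0 = b - g ^ (l%:Z - 1 - i).
Proof. by case: l => // l _; rewrite Rb_neq // oppr0 expr0z mulr1. Qed.

Lemma lamii k : lam g b i k k = 1.
Proof. by case: k => //= k; rewrite eqxx. Qed.

Lemma lamS0 k : lam g b i k.+1 0 = Rb g b i k.+1 0 * lam g b i k 0.
Proof. by []. Qed.

Lemma lamSS k p : (p < k)%N ->
  lam g b i k.+1 p.+1 = Rb g b i k.+1 p.+1 * lam g b i k p.+1 + lam g b i k p.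
Proof. by move=> ltpk /=; rewrite eqSS ltn_eqF. Qed.

Hypothesis g_neq0 : g != 0.

Lemma expfz_addn (z : int) (m : nat) : g ^ (z + m%:Z) = g ^ z * g ^+ m.
Proof. by rewrite expfzDr. Qed.

Lemma expfz_subn (z : int) (m : nat) : g ^ (z - m%:Z) = g ^ z / g ^+ m.
Proof. by rewrite expfzDr // -invr_expz. Qed.

Lemma lam_closed_form k p : (p <= k)%N ->
  lam g b i k p =
    qbinom g k p * g ^ (- (((k - p) * p)%N%:Z)) *
    \prod_(p.+1 <= l < k.+1) Rb g b i l 0.
Proof.
elim: k p => [|k IHk] p lepk.
  by case: p lepk => // _; rewrite big_geq // expr0z !mulr1.
have [-> | nepk] := eqVneq p k.+1.
  by rewrite lamii qbinomii subnn mul0n oppr0 expr0z big_geq // !mulr1.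
have {lepk nepk} ltpk : (p < k.+1)%N by rewrite ltn_neqAle nepk.
case: p ltpk => [|p] ltpk.
  rewrite lamS0 IHk // !qbinom0 !subn0 !muln0 oppr0 expr0z !mul1r.
  by rewrite [in RHS]big_nat_recr //= mulrC.
rewrite lamSS // (IHk p.+1) // (IHk p (ltnW ltpk)) Rb_neq ?ltn_eqF //.
set Q := qbinom g k.+1 p.+1; set A := qbinom g k p.+1; set C := qbinom g k p.
rewrite (big_ltn (m := p.+1)) // [in RHS]big_nat_recr //= !Rb_0 //.
set P := \prod_(_ <= _ < _) _.
set E := g ^ (- ((k.+1 - p.+1) * p.+1)%N%:Z).
set G := g ^ (k.+1%:Z - 1 - i).
set x := g ^+ p.+1; set y := g ^+ (k - p).
have x_neq0 : x != 0 by rewrite expf_neq0.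
have y_neq0 : y != 0 by rewrite expf_neq0.
have -> : g ^ (- p.+1%:Z) = x^-1 by rewrite -invr_expz.
have -> : g ^ (- ((k - p.+1) * p.+1)%N%:Z) = E * x.
  by rewrite -expfz_addn; congr (g ^ _); nia.
have -> : g ^ (- ((k - p) * p)%N%:Z) = E * y.
  by rewrite -expfz_addn; congr (g ^ _); nia.
have -> : g ^ (p.+1%:Z - 1 - i) = G / y.
  by rewrite -expfz_subn; congr (g ^ _); lia.
have pascal : Q = C + x * A by [].
have pascal_dual : Q = y * C + A by apply: qbinomSS_dual; exact: ltnW.
transitivity ((b * (y * C + A) - G * (C + x * A)) * E * P).
  by field; rewrite x_neq0 y_neq0.
by rewrite -pascal -pascal_dual; ring.
Qed.

End LambdaClosedForm.

Theorem proposition3p12 (F : closedFieldType) (n : nat) (g : F)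
  (hchar : [pchar F] =i pred0) (hn : (1 <= n)%N) (hg : n.-primitive_root g)
  (i : int) (b : F) (hb : b != 0) (k p : nat) (hpk : (p <= k)%N) :
  lam g b i k p =
    qbinom g k p * g ^ (- (((k - p) * p)%N%:Z)) *
    \prod_(p.+1 <= l < k.+1) Rb g b i l 0.
Proof.
apply: lam_closed_form hpk.
by rewrite (prim_root_eq0 hg) -lt0n.
Qed.
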